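(* Let $0<\epsilon<1/2$, $C=\lceil\epsilon^{-1}\rceil$ and $c\in\{0,\dots,C-1\}$. Let $G$ be a graph with edge weights $w(e)\ge1$, and let $G^c$, its levels and the combined matching $\hat{M}^c$ be as defined below, where for every level $l$ the matching $M^c_l$ is a $(1+\epsilon)$-approximate maximum weight matching of the subgraph of $G^c$ consisting of its level-$l$ edges. Let $\mathcal{M}^c$ be a maximum weight matching of $G^c$. Then $$(1+7\epsilon)\,w(\hat{M}^c)\ge w(\mathcal{M}^c).$$
   Context: An edge $e$ is in bucket $b\in\mathbb{Z}$ if $w(e)\in[\epsilon^{-b},\epsilon^{-(b+1)})$. The graph $G^c$ is obtained from $G$ by removing all edges whose bucket $b$ satisfies $b\equiv c\pmod C$. Level $l$ of copy $c$ consists of the edges of $G^c$ in buckets $lC+c+1,\dots,(l+1)C+c-1$. The combined matching $\hat{M}^c$ is formed greedily: start from $\emptyset$; for $l$ from the maximum level down to the minimum, add the (remaining) edges of $M^c_l$, and for each $(u,v)\in M^c_l$ remove all edges incident to $u$ or $v$ from every $M^c_{l'}$ with $l'<l$. For an edge set $S$, $w(S)=\sum_{e\in S}w(e)$; a matching $M$ of $H$ is a $(1+\epsilon)$-approximate maximum weight matching if $w(M)\ge\frac{1}{1+\epsilon}$ times the maximum weight of a matching of $H$. *)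

From HB Require Import structures.
From mathcomp Require Import all_boot all_order all_algebra.
From mathcomp Require Import intdiv boolp reals.
Set Implicit Arguments. Unset Strict Implicit. Unset Printing Implicit Defensive.
Import Order.TTheory GRing.Theory Num.Theory.
Local Open Scope ring_scope.

Section Defs.
Variables (R : realType) (V : finType).
Implicit Types (E F M : {set {set V}}) (w : {set V} -> R) (eps : R).

Definition Cof eps : int := Num.ceil (eps^-1).

Definition in_bucket w eps (e : {set V}) (b : int) : Prop :=
  (eps^-1) ^ b <= w e /\ w e < (eps^-1) ^ (b + 1).

Definition Gc_edges E w eps (c : int) : {set {set V}} :=
  [set e in E | `[< ~ exists b, in_bucket w eps e b /\ (b = c %[mod Cof eps])%Z >]].

Definition level_edges E w eps (c l : int) : {set {set V}} :=
  [set e in Gc_edges E w eps c | `[< exists b, in_bucket w eps e b /\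
      l * Cof eps + c + 1 <= b /\ b <= (l + 1) * Cof eps + c - 1 >]].

Definition is_matching F M : Prop :=
  M \subset F /\ {in M &, forall e f : {set V}, e != f -> [disjoint e & f]}.

Definition wsum w M : R := \sum_(e in M) w e.

Definition is_max_weight_matching w F M : Prop :=
  is_matching F M /\ forall M', is_matching F M' -> wsum w M' <= wsum w M.

Definition is_approx_mwm w eps F M : Prop :=
  is_matching F M /\
  forall M', is_matching F M' -> (1 + eps)^-1 * wsum w M' <= wsum w M.

Definition greedy_step (M : int -> {set {set V}}) (acc : {set {set V}}) (l : int)
  : {set {set V}} :=
  acc :|: [set e in M l | [forall f in acc, [disjoint e & f]]].

Definition levels_down (lmin lmax : int) : seq int :=
  [seq lmax - i%:Z | i <- iota 0 (absz (lmax - lmin)).+1].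

Definition combined (M : int -> {set {set V}}) (lmin lmax : int) : {set {set V}} :=
  foldl (greedy_step M) set0 (levels_down lmin lmax).

End Defs.

From HB Require Import structures.
From mathcomp Require Import all_boot all_order all_algebra.
From mathcomp Require Import intdiv boolp reals.
From mathcomp Require Import lra zify.
Set Implicit Arguments. Unset Strict Implicit. Unset Printing Implicit Defensive.
Import Order.TTheory GRing.Theory Num.Theory.
Local Open Scope ring_scope.

(* Every edge of G^c lies in exactly one level, so the approximation guarantee
   gives w(Mopt) <= (1 + eps) sum_l w(M_l).  Let U_l = eps^-((l+1) C + c), the
   lower end of the removed bucket just above level l.  Edges of M_l weigh less
   than U_l and, because the bucket below level l is removed too, at least
   U_(l-1) / eps; moreover 2 U_(l-1) <= U_l.  When the greedy reaches level l,
   each accepted edge blocks at most two edges of M_l, one per endpoint.  Hence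
   the potential (1 + 4 eps) w(acc) - 4 |acc| U_l grows by at least w(M_l) per
   level: the blocked weight is paid by halving the charge of the old edges,
   while each new edge e pays its own charge 4 U_(l-1) <= 4 eps w(e).  So
   sum_l w(M_l) <= (1 + 4 eps) w(\hat M^c), and (1 + eps)(1 + 4 eps) <= 1 + 7 eps
   for eps <= 1/2. *)

Lemma card_blocked {V : finType} (acc M : {set {set V}}) :
  (forall f, f \in acc -> #|f| = 2%N) ->
  {in M &, forall e f : {set V}, e != f -> [disjoint e & f]} ->
  (#|M :\: [set e in M | [forall f in acc, [disjoint e & f]]]| <= 2 * #|acc|)%N.
Proof.
move=> acc2 Mmatch; set B := _ :\: _.
pose hit (e : {set V}) := [pick v in e :&: cover acc].
have hitP e : e \in B -> e \in M /\ exists2 v, hit e = Some v & v \in e :&: cover acc.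
  rewrite !inE => /andP[/negP blocked eM]; split => //.
  rewrite /hit; case: pickP => [v ev|none]; first by exists v.
  exfalso; apply: blocked; rewrite eM; apply/forall_inP => f fa.
  apply/pred0P => v /=; apply/negP => /andP[ve vf].
  have := none v; rewrite !inE ve /= => /negP; apply.
  by apply/bigcupP; exists f.
have hit_inj : {in B &, injective hit}.
  move=> e1 e2 /hitP[e1M [v hit1 /setIP[ve1 _]]] /hitP[e2M [v' hit2 /setIP[ve2 _]]].
  rewrite hit1 hit2 => -[vv']; rewrite -vv' in ve2.
  apply/eqP/negPn/negP => ne.
  by have /pred0P/(_ v) := Mmatch _ _ e1M e2M ne; rewrite /= ve1 ve2.
have hit_sub : hit @: B \subset Some @: cover acc.
  apply/subsetP => _ /imsetP[e /hitP[_ [v -> /setIP[_ vc]]] ->].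
  by apply/imsetP; exists v.
rewrite -(card_in_imset hit_inj); apply: leq_trans (subset_leq_card hit_sub) _.
rewrite card_imset; last by move=> ? ? [].
apply: leq_trans (leq_card_cover acc).1 _.
rewrite (eq_bigr (fun=> 2%N)) => [|f /acc2 //].
by rewrite sum_nat_const mulnC.
Qed.

Lemma wsum_le_sum_cover {R : realType} {V : finType} {I : eqType}
    (w : {set V} -> R) (A : {set {set V}}) (L : I -> {set {set V}}) (s : seq I) :
  (forall e, e \in A -> 0 <= w e) ->
  (forall e, e \in A -> exists2 l, l \in s & e \in L l) ->
  wsum w A <= \sum_(l <- s) wsum w (A :&: L l).
Proof.
move=> w_ge0 A_cover.
have -> : \sum_(l <- s) wsum w (A :&: L l) =
    \sum_(e in A) \sum_(l <- s) (if e \in L l then w e else 0).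
  rewrite exchange_big /=; apply: eq_bigr => l _.
  rewrite /wsum big_mkcond [RHS]big_mkcond /=; apply: eq_bigr => e _.
  by rewrite inE; case: (e \in A).
apply: ler_sum => e eA; have [l ls eL] := A_cover e eA.
rewrite (big_rem l ls) /= eL lerDl sumr_ge0 // => l' _.
by case: ifP => _; rewrite ?w_ge0.
Qed.

Lemma approx_mwm_le {R : realType} {V : finType} (w : {set V} -> R) (eps : R)
    (F Mapx Mopt : {set {set V}}) :
  0 <= eps -> is_approx_mwm w eps F Mapx ->
  {in Mopt &, forall e f : {set V}, e != f -> [disjoint e & f]} ->
  wsum w (Mopt :&: F) <= (1 + eps) * wsum w Mapx.
Proof.
move=> eps_ge0 [_ Mapx_max] Mopt_match.
have Mopt_F : is_matching F (Mopt :&: F).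
  split; first exact: subsetIr.
  by move=> e f /setIP[eM _] /setIP[fM _]; apply: Mopt_match.
have eps1_gt0 : 0 < 1 + eps by lra.
rewrite -[X in X <= _](mulVKf (lt0r_neq0 eps1_gt0)).
by apply: ler_wpM2l; [exact: ltW | exact: Mapx_max].
Qed.

Lemma levels_cons (n : int) (k : nat) :
  [seq n - i%:Z | i <- iota 0 k.+1] = n :: [seq (n - 1) - i%:Z | i <- iota 0 k].
Proof.
rewrite /= -(addn0 1%N) iotaDl -map_comp subr0; congr (_ :: _).
by apply: eq_map => i /=; lia.
Qed.

Lemma mem_levels_down (lmin lmax l : int) :
  lmin <= lmax -> (l \in levels_down lmin lmax) = (lmin <= l <= lmax).
Proof.
move=> lmin_le; apply/mapP/andP => [[i] | [lmin_l l_lmax]].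
  rewrite mem_iota add0n ltnS => /andP[_ i_le] ->.
  by move: i_le; rewrite -lez_nat gez0_abs ?subr_ge0 //; lia.
exists (absz (lmax - l)); last by rewrite gez0_abs ?subr_ge0 //; lia.
by rewrite mem_iota add0n ltnS -lez_nat !gez0_abs ?subr_ge0 //; lia.
Qed.

Section GreedyPotential.
Variables (R : realType) (V : finType) (w : {set V} -> R) (eps : R).
Variables (M : int -> {set {set V}}) (U : int -> R).
Hypothesis M_card2 : forall l e, e \in M l -> #|e| = 2%N.
Hypothesis M_matching :
  forall l, {in M l &, forall e f : {set V}, e != f -> [disjoint e & f]}.
Hypothesis M_weight_lt : forall l e, e \in M l -> w e < U l.
Hypothesis M_weight_ge : forall l e, e \in M l -> U (l - 1) <= eps * w e.
Hypothesis U_ge0 : forall l, 0 <= U l.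
Hypothesis U_double : forall l, 2 * U (l - 1) <= U l.

Definition greedy_potential (acc : {set {set V}}) (l : int) : R :=
  (1 + 4 * eps) * wsum w acc - 4 * #|acc|%:R * U l.

Lemma greedy_step_card2 (acc : {set {set V}}) (l : int) :
  (forall f, f \in acc -> #|f| = 2%N) ->
  forall f, f \in greedy_step M acc l -> #|f| = 2%N.
Proof. by move=> acc2 f /setUP[/acc2 | /setIdP[/M_card2]]. Qed.

Lemma greedy_step_potential (acc : {set {set V}}) (l : int) :
  (forall f, f \in acc -> #|f| = 2%N) ->
  greedy_potential acc l + wsum w (M l) <= greedy_potential (greedy_step M acc l) (l - 1).
Proof.
move=> acc2; pose A := [set e in M l | [forall f in acc, [disjoint e & f]]].
have AM : A \subset M l by apply/subsetP => e /setIdP[].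
have acc_A : [disjoint acc & A].
  apply/pred0P => e /=; apply/negP => /andP[e_acc /setIdP[eM /forall_inP/(_ e e_acc)]].
  rewrite -setI_eq0 setIid => /eqP e0.
  by have := M_card2 eM; rewrite e0 cards0.
have wsumU : wsum w (acc :|: A) = wsum w acc + wsum w A.
  by rewrite /wsum -bigU //; apply: eq_bigl => e; rewrite !inE.
have cardU : #|acc :|: A| = (#|acc| + #|A|)%N.
  by rewrite cardsU (disjoint_setI0 acc_A) cards0 subn0.
have wsumM : wsum w (M l) = wsum w A + wsum w (M l :\: A).
  by rewrite /wsum (big_setID A) /= (setIidPr AM).
have blocked : wsum w (M l :\: A) <= 2 * #|acc|%:R * U l.
  apply: (@le_trans _ _ (#|M l :\: A|%:R * U l)).
    rewrite /wsum mulr_natl -sumr_const; apply: ler_sum => e /setDP[eM _].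
    exact/ltW/M_weight_lt.
  by rewrite ler_wpM2r // -natrM ler_nat card_blocked.
have added : #|A|%:R * U (l - 1) <= eps * wsum w A.
  rewrite /wsum mulr_sumr mulr_natl -sumr_const; apply: ler_sum => e eA.
  exact/M_weight_ge/(subsetP AM).
have acc_charge : #|acc|%:R * (2 * U (l - 1)) <= #|acc|%:R * U l.
  by rewrite ler_wpM2l.
rewrite /greedy_potential /greedy_step -/A wsumU cardU wsumM natrD.
have := U_ge0 l; have := U_ge0 (l - 1); lra.
Qed.

Lemma greedy_potential_foldl (k : nat) (acc : {set {set V}}) (n : int) :
  (forall f, f \in acc -> #|f| = 2%N) ->
  greedy_potential acc n + \sum_(l <- [seq n - i%:Z | i <- iota 0 k]) wsum w (M l) <=
  greedy_potential (foldl (greedy_step M) acc [seq n - i%:Z | i <- iota 0 k]) (n - k%:Z).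
Proof.
elim: k acc n => [|k IH] acc n acc2; first by rewrite big_nil addr0 subr0.
rewrite levels_cons big_cons /= addrA.
have -> : n - k.+1%:Z = n - 1 - k%:Z by lia.
apply: le_trans (IH _ _ (@greedy_step_card2 acc n acc2)).
by rewrite lerD2r greedy_step_potential.
Qed.

Lemma combined_weight (lmin lmax : int) :
  \sum_(l <- levels_down lmin lmax) wsum w (M l) <=
  (1 + 4 * eps) * wsum w (combined M lmin lmax).
Proof.
have set0_card2 (f : {set V}) : f \in set0 -> #|f| = 2%N by rewrite inE.
have wsum0 : wsum w set0 = 0 by rewrite /wsum big_set0.
have := @greedy_potential_foldl (absz (lmax - lmin)).+1 set0 lmax set0_card2.
rewrite /greedy_potential wsum0 cards0 !(mulr0n, mulr0, mul0r, oppr0, add0r).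
move=> /le_trans; apply; rewrite gerBl.
by rewrite mulr_ge0 ?mulr_ge0 ?U_ge0.
Qed.

End GreedyPotential.

Lemma exists_expn_gt {R : archiRealFieldType} (x q : R) : 2 <= q -> exists n, x < q ^+ n.
Proof.
move=> q2; exists (Num.bound `|x|).
apply: le_lt_trans (ler_norm x) _; apply: lt_le_trans (archi_boundP (normr_ge0 x)) _.
apply: le_trans (lerXn2r _ _ _ q2); rewrite ?nnegrE ?(le_trans _ q2) //.
by rewrite -natrX ler_nat ltnW // ltn_expl.
Qed.

Lemma exists_expz_bucket {R : archiRealFieldType} (q x : R) :
  2 <= q -> 1 <= x -> exists b : int, q ^ b <= x < q ^ (b + 1).
Proof.
move=> q2 x1; have [n x_lt n_min] := ex_minnP (exists_expn_gt x q2).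
case: n x_lt n_min => [|n] x_lt n_min; first by move: x_lt; rewrite expr0; lra.
exists n; have -> : n%:Z + 1 = n.+1 by lia.
rewrite -!exprnP x_lt andbT leNgt.
by apply/negP => /n_min; rewrite ltnn.
Qed.

Section Levels.
Variables (R : realType) (V : finType) (E : {set {set V}}) (w : {set V} -> R).
Variables (eps : R) (c : int).
Hypotheses (eps_gt0 : 0 < eps) (eps_lt_half : eps < 1 / 2) (Cof_gt0 : 0 < Cof eps).

Lemma inv_eps_gt2 : 2 < eps^-1.
Proof.
have := eps_lt_half; rewrite ltr_pdivlMr // => eps2_lt1.
by rewrite -[ltRHS]mul1r ltr_pdivlMr //; lra.
Qed.

Let inv_eps_gt1 : 1 < eps^-1.
Proof. by have := inv_eps_gt2; lra. Qed.

Definition level_top (l : int) : R := eps^-1 ^ ((l + 1) * Cof eps + c).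

Lemma level_top_gt0 (l : int) : 0 < level_top l.
Proof. by rewrite exprz_gt0 // invr_gt0. Qed.

Lemma level_top_double (l : int) : 2 * level_top (l - 1) <= level_top l.
Proof.
rewrite /level_top subrK.
have -> : (l + 1) * Cof eps + c = (l * Cof eps + c) + Cof eps.
  by rewrite mulrDl mul1r addrAC.
rewrite [leRHS]expfzDr ?invr_eq0 ?gt_eqF //.
rewrite mulrC ler_pM2l ?exprz_gt0 ?invr_gt0 //.
apply: le_trans (ltW inv_eps_gt2) _.
by rewrite -[leLHS]expr1z ler_eXz2l //; lia.
Qed.

Lemma level_edge_bucket (l : int) (e : {set V}) : e \in level_edges E w eps c l ->
  exists2 b, in_bucket w eps e b &
    l * Cof eps + c + 1 <= b /\ b <= (l + 1) * Cof eps + c - 1.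
Proof. by rewrite inE => /andP[_ /asboolP[b [eb bounds]]]; exists b. Qed.

Lemma level_weight_lt (l : int) (e : {set V}) :
  e \in level_edges E w eps c l -> w e < level_top l.
Proof.
move=> /level_edge_bucket[b [_ wb] [_ b_le]].
by apply: lt_le_trans wb _; rewrite ler_eXz2l //; lia.
Qed.

Lemma level_weight_ge (l : int) (e : {set V}) :
  e \in level_edges E w eps c l -> level_top (l - 1) <= eps * w e.
Proof.
move=> /level_edge_bucket[b [wb _] [b_ge _]].
have : eps^-1 ^ (l * Cof eps + c + 1) <= w e.
  by apply: le_trans wb; rewrite ler_eXz2l.
rewrite /level_top subrK expfzDr ?invr_eq0 ?gt_eqF // expr1z => top_le.
rewrite -[leLHS](mulfVK (lt0r_neq0 eps_gt0)) mulrC.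
by apply: ler_wpM2l; first exact: ltW.
Qed.

Lemma Gc_edge_in_level (e : {set V}) :
  1 <= w e -> e \in Gc_edges E w eps c -> exists l, e \in level_edges E w eps c l.
Proof.
move=> w_ge1 eG; have [b b_bucket] : exists b, in_bucket w eps e b.
  by have [b /andP[]] := exists_expz_bucket (ltW inv_eps_gt2) w_ge1; exists b.
have := eG; rewrite inE => /andP[_ /asboolP b_kept]; have C_gt0 := Cof_gt0.
set C := Cof eps in C_gt0 b_kept *.
exists ((b - c - 1) %/ C)%Z; rewrite inE eG /=; apply/asboolP; exists b; split=> //.
have b_div := divz_eq (b - c - 1) C.
have r_ge0 := modz_ge0 (b - c - 1) (lt0r_neq0 C_gt0).
have r_lt := ltz_pmod (b - c - 1) C_gt0.
set l := ((b - c - 1) %/ C)%Z in b_div *; set r := ((b - c - 1) %% C)%Z in b_div r_ge0 r_lt *.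
(* The remainder C - 1 would put b in the removed bucket (l + 1) C + c. *)
have [r_top | r_ntop] := eqVneq r (C - 1).
  exfalso; apply: b_kept; exists b; split=> //.
  have -> : b = (l + 1) * C + c by rewrite mulrDl mul1r; lia.
  exact: modzMDl.
have : r < C - 1 by rewrite lt_neqAle r_ntop /=; lia.
by rewrite mulrDl mul1r; lia.
Qed.

Lemma wsum_le_sum_levels (A : {set {set V}}) (lmin lmax : int) :
  (forall e, e \in E -> 1 <= w e) -> A \subset Gc_edges E w eps c -> lmin <= lmax ->
  (forall l, (l < lmin) || (lmax < l) -> level_edges E w eps c l = set0) ->
  wsum w A <= \sum_(l <- levels_down lmin lmax) wsum w (A :&: level_edges E w eps c l).
Proof.
move=> E_weight1 A_sub lmin_le level_out.
have A_weight1 e : e \in A -> 1 <= w e.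
  by move=> /(subsetP A_sub); rewrite inE => /andP[/E_weight1].
apply: wsum_le_sum_cover => e eA; first exact: le_trans (A_weight1 e eA).
have [l el] := Gc_edge_in_level (A_weight1 e eA) (subsetP A_sub e eA).
exists l => //; rewrite mem_levels_down //.
case: (boolP ((l < lmin) || (lmax < l))) => [/level_out l_empty | ].
  by rewrite l_empty inE in el.
by rewrite negb_or -!leNgt.
Qed.

End Levels.

Lemma approx_combined_bound {R : realFieldType} (eps S W : R) :
  0 <= eps -> eps < 1 / 2 -> 0 <= S -> S <= (1 + 4 * eps) * W ->
  (1 + eps) * S <= (1 + 7 * eps) * W.
Proof.
rewrite ltr_pdivlMr // => eps_ge0 eps2_lt1 S_ge0 S_le.
have W_ge0 : 0 <= W.
  by have := le_trans S_ge0 S_le; rewrite pmulr_rge0 //; lra.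
have := ler_wpM2l (_ : 0 <= 1 + eps) S_le.
have : 0 <= eps * W * (1 - 2 * eps) by rewrite !mulr_ge0 //; lra.
by nra.
Qed.

Theorem lemma10 (R : realType) (V : finType) (E : {set {set V}})
  (w : {set V} -> R) (eps : R) (c : int) (M : int -> {set {set V}})
  (lmin lmax : int) (Mopt : {set {set V}}) :
  0 < eps -> eps < 1 / 2 ->
  (forall e, e \in E -> #|e| = 2%N) ->
  (forall e, e \in E -> 1 <= w e) ->
  0 <= c < Cof eps ->
  (forall l : int, is_approx_mwm w eps (level_edges E w eps c l) (M l)) ->
  lmin <= lmax ->
  (forall l : int, (l < lmin) || (lmax < l) -> level_edges E w eps c l = set0) ->
  is_max_weight_matching w (Gc_edges E w eps c) Mopt ->
  wsum w Mopt <= (1 + 7 * eps) * wsum w (combined M lmin lmax).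
Proof.
move=> eps_gt0 eps_lt_half E_card2 E_weight1 /andP[c_ge0 c_lt] Mapx lmin_le level_out
  [[Mopt_sub Mopt_match] _].
have C_gt0 : 0 < Cof eps := le_lt_trans c_ge0 c_lt.
have Gc_E e : e \in Gc_edges E w eps c -> e \in E by rewrite inE => /andP[].
have M_level l e : e \in M l -> e \in level_edges E w eps c l.
  by case: (Mapx l) => -[/subsetP M_sub _] _ /M_sub.
have M_E l e : e \in M l -> e \in E by move=> /M_level; rewrite inE => /andP[/Gc_E].
have greedy := combined_weight
  (fun l e eM => E_card2 e (M_E l e eM))
  (fun l => proj2 (proj1 (Mapx l)))
  (fun l e eM => level_weight_lt eps_gt0 eps_lt_half C_gt0 (M_level l e eM))
  (fun l e eM => level_weight_ge eps_gt0 eps_lt_half (M_level l e eM))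
  (fun l => ltW (level_top_gt0 c eps_gt0 l))
  (level_top_double c eps_gt0 eps_lt_half C_gt0) lmin lmax.
have levels := wsum_le_sum_levels eps_gt0 eps_lt_half C_gt0 E_weight1 Mopt_sub lmin_le level_out.
have approx : \sum_(l <- levels_down lmin lmax) wsum w (Mopt :&: level_edges E w eps c l)
    <= (1 + eps) * \sum_(l <- levels_down lmin lmax) wsum w (M l).
  by rewrite mulr_sumr; apply: ler_sum => l _; apply: approx_mwm_le (ltW eps_gt0) (Mapx l) Mopt_match.
have S_ge0 : 0 <= \sum_(l <- levels_down lmin lmax) wsum w (M l).
  by apply: sumr_ge0 => l _; apply: sumr_ge0 => e /M_E /E_weight1; apply: le_trans.
apply: le_trans levels (le_trans approx _).
exact: approx_combined_bound (ltW eps_gt0) eps_lt_half S_ge0 greedy.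
Qed.
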